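(* For every integer $k\ge2$, with $d=k(k-1)/2$, there exist linear operators $A_1,\ldots,A_k\colon\mathbb{R}^k\to\mathbb{R}^d$ such that for every $x\in\mathbb{R}^k$ the vectors $A_1x,\ldots,A_kx$ are linearly dependent, while for every nonzero $x=(x_1,\ldots,x_k)\in\mathbb{R}^k$ the operator $\sum_{i=1}^kx_iA_i$ has rank exactly $k-1$. In particular, no nontrivial linear combination of $A_1,\ldots,A_k$ has rank less than $k-1$. *)

From HB Require Import structures.
From mathcomp Require Import all_boot all_order all_algebra.
Set Implicit Arguments. Unset Strict Implicit. Unset Printing Implicit Defensive.
Import Order.TTheory GRing.Theory Num.Theory.
Local Open Scope ring_scope.

Definition lin_dependent (R : fieldType) (V : lmodType R) (n : nat)
  (v : 'I_n -> V) : Prop :=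
  exists c : 'I_n -> R, (exists i, c i != 0) /\ \sum_(i < n) c i *: v i = 0.

From HB Require Import structures.
From mathcomp Require Import all_boot all_order all_algebra.
From mathcomp Require Import ring zify.
Import Order.TTheory GRing.Theory Num.Theory.
Set Implicit Arguments. Unset Strict Implicit. Unset Printing Implicit Defensive.
Local Open Scope ring_scope.

(* Index the d = k(k-1)/2 rows by the 2-subsets {a, b} of
   {0..k-1} (a < b) and let A_l u have {a, b}-entry  [l = a] u_b - [l = b] u_a,
   the {a, b}-coordinate of e_l /\ u.  Then the pencil N(x) = sum_l x_l A_l
   sends u to the coordinates of x /\ u, i.e.
       (N(x) u)_{a,b} = x_a u_b - x_b u_a.
   Hence N(x) x = 0, which is a vanishing combination of A_1 x, ..., A_k x
   with coefficients x; and for x <> 0 the kernel of N(x) is exactly the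
   line spanned by x (all 2x2 minors of (x | u) vanish), so N(x) has rank
   k - 1.  The file first proves the general linear-algebra fact "a matrix
   whose kernel is a line has corank one", then the two identities for the
   pairwise antisymmetric forms, then the kernel computation for the
   pencil, and finally assembles the operators by enumerating 2-subsets. *)

Lemma rank_of_kernel_line (F : fieldType) m n (N : 'M[F]_(m, n))
    (x : 'cV[F]_n) :
  x != 0 -> N *m x = 0 -> (forall u, N *m u = 0 -> exists a, u = a *: x) ->
  \rank N = n.-1.
Proof.
move=> xn0 Nx0 kerN.
have ker_ge : (x^T <= kermx N^T)%MS.
  by apply/sub_kermxP; rewrite -trmx_mul Nx0 trmx0.
have ker_le : (kermx N^T <= x^T)%MS.
  apply/row_subP => r; apply/sub_rVP.
  have /sub_kermxP hu : (row r (kermx N^T) <= kermx N^T)%MS by exact: row_sub.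
  have [a ua] : exists a, (row r (kermx N^T))^T = a *: x.
    by apply: kerN; move: (congr1 trmx hu); rewrite trmx_mul trmxK trmx0.
  by exists a; rewrite -[row r _]trmxK ua linearZ.
have rank_ker : \rank (kermx N^T) = 1%N.
  apply/eqP; rewrite eqn_leq (leq_trans (mxrankS ker_le)) ?rank_leq_row //=.
  apply: leq_trans (mxrankS ker_ge); rewrite lt0n mxrank_eq0.
  by apply: contra xn0 => /eqP/(congr1 trmx); rewrite trmxK trmx0 => ->.
move: rank_ker; rewrite mxrank_ker mxrank_tr.
have := rank_leq_col N; lia.
Qed.

Section PairForms.

Variables (R : realFieldType) (k : nat).
Implicit Types (S : {set 'I_k}) (l c : 'I_k) (x u : 'cV[R]_k).

Definition order_sign l c : R := ((l < c)%N)%:R - ((c < l)%N)%:R.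

Definition pair_coef S l c : R := ((l \in S) && (c \in S))%:R * order_sign l c.

Definition pair_form S x u : R :=
  \sum_l \sum_c x l 0 * u c 0 * pair_coef S l c.

Lemma order_signC l c : order_sign c l = - order_sign l c.
Proof. by rewrite /order_sign opprB. Qed.

Lemma order_sign_neq0 l c : l != c -> order_sign l c != 0.
Proof.
rewrite /order_sign neq_ltn => /orP[] lt_lc.
  by rewrite lt_lc ltnNge ltnW // subr0 oner_eq0.
by rewrite lt_lc ltnNge ltnW // sub0r oppr_eq0 oner_eq0.
Qed.

Lemma pair_coefC S l c : pair_coef S c l = - pair_coef S l c.
Proof. by rewrite /pair_coef andbC order_signC mulrN. Qed.

(* The form is alternating, because its coefficients are antisymmetric. *)
Lemma pair_form_alt S x : pair_form S x x = 0.
Proof.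
have anti : pair_form S x x = - pair_form S x x.
  rewrite {1}/pair_form exchange_big /= -sumrN; apply: eq_bigr => l _.
  rewrite -sumrN; apply: eq_bigr => c _.
  by rewrite pair_coefC mulrN (mulrC (x c 0)).
have : pair_form S x x *+ 2 == 0 by rewrite mulr2n {1}anti addNr.
by rewrite mulrn_eq0 /= => /eqP.
Qed.

Lemma pair_form_minor (i j : 'I_k) x u : i != j ->
  pair_form [set i; j] x u = order_sign i j * (x i 0 * u j 0 - x j 0 * u i 0).
Proof.
move=> neq_ij.
have sum_pair (F : 'I_k -> R) : (forall l, l \notin [set i; j] -> F l = 0) ->
    \sum_l F l = F i + F j.
  move=> F0; rewrite (bigID (mem [set i; j])) /= [X in _ + X]big1 ?addr0 //.
  have -> : \sum_(l | l \in [set i; j]) F l = \sum_(l in i |: [set j]) F l by [].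
  by rewrite big_setU1 ?inE //= big_set1.
have coef_out l c : (l \notin [set i; j]) || (c \notin [set i; j]) ->
    pair_coef [set i; j] l c = 0.
  by rewrite /pair_coef -negb_and => /negbTE ->; rewrite mul0r.
rewrite /pair_form sum_pair => [|l l_out]; last first.
  by apply: big1 => c _; rewrite coef_out ?l_out // mulr0.
rewrite !sum_pair => [|c c_out|c c_out];
  try by rewrite coef_out ?c_out ?orbT // mulr0.
rewrite /pair_coef !inE !eqxx ?orbT /= !mul1r /order_sign !ltnn subrr.
rewrite !mulr0 add0r addr0 -/(order_sign i j) -/(order_sign j i) order_signC.
ring.
Qed.

Definition pair_ops {d} (S : 'I_d -> {set 'I_k}) l : 'M[R]_(d, k) :=
  \matrix_(r, c) pair_coef (S r) l c.

Lemma pencil_apply {d} (S : 'I_d -> {set 'I_k}) x u r :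
  ((\sum_l x l 0 *: pair_ops S l) *m u) r 0 = pair_form (S r) x u.
Proof.
rewrite mxE /pair_form exchange_big /=; apply: eq_bigr => c _.
rewrite summxE mulr_suml; apply: eq_bigr => l _.
by rewrite !mxE mulrAC.
Qed.

Lemma pencil_self {d} (S : 'I_d -> {set 'I_k}) x :
  (\sum_l x l 0 *: pair_ops S l) *m x = 0.
Proof. by apply/matrixP => r j; rewrite ord1 pencil_apply pair_form_alt mxE. Qed.

(* If every 2-subset occurs among the S r, the kernel of the pencil at a
   nonzero x is the line through x: all 2x2 minors of (x | u) vanish. *)
Lemma pencil_kernel {d} (S : 'I_d -> {set 'I_k}) x :
  (forall i j : 'I_k, i != j -> exists r, S r = [set i; j]) -> x != 0 ->
  forall u, (\sum_l x l 0 *: pair_ops S l) *m u = 0 -> exists a, u = a *: x.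
Proof.
move=> S_onto xn0 u Nu0.
have [i0 [j0]] := matrix0Pn _ xn0; rewrite ord1 => xi0.
have minor0 j : x i0 0 * u j 0 = x j 0 * u i0 0.
  have [-> | neq_j] := eqVneq j i0; first by rewrite mulrC.
  have [r Sr] : exists r, S r = [set i0; j] by apply: S_onto; rewrite eq_sym.
  have := pencil_apply S x u r; rewrite Nu0 Sr mxE.
  rewrite pair_form_minor 1?eq_sym // => /esym/eqP.
  have sign_nz : order_sign i0 j != 0 by rewrite order_sign_neq0 // eq_sym.
  rewrite mulf_eq0 (negbTE sign_nz) /= subr_eq0.
  by move/eqP.
exists (u i0 0 / x i0 0); apply/matrixP => j c; rewrite ord1 !mxE.
by apply: (mulfI xi0); rewrite minor0; field.
Qed.

End PairForms.

Lemma card_two_subsets k :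
  #|[set S : {set 'I_k} | #|S| == 2]| = ((k * (k - 1)) %/ 2)%N.
Proof. by rewrite card_draws card_ord bin2 divn2 subn1. Qed.

Theorem mainTheorem8 (R : realFieldType) (k : nat) (hk : (2 <= k)%N) :
  exists A : 'I_k -> 'M[R]_((k * (k - 1)) %/ 2, k),
    (forall x : 'cV[R]_k, lin_dependent (fun i : 'I_k => A i *m x)) /\
    (forall x : 'cV[R]_k, x != 0 ->
       \rank (\sum_(i < k) x i 0 *: A i)%R = k.-1).
Proof.
pose S r := enum_val (cast_ord (esym (card_two_subsets k)) r).
have S_onto (i j : 'I_k) : i != j -> exists r, S r = [set i; j].
  move=> neq_ij; have two : [set i; j] \in [set S : {set 'I_k} | #|S| == 2].
    by rewrite inE cards2 neq_ij.
  by exists (cast_ord (card_two_subsets k) (enum_rank_in two [set i; j]));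
    rewrite /S cast_ordK enum_rankK_in.
exists (pair_ops R S); split=> [x | x xn0].
  have [-> | xn0] := eqVneq x 0.
    exists (fun=> 1); split; first by exists (Ordinal (ltnW hk)); rewrite oner_neq0.
    by apply: big1 => i _; rewrite mulmx0 scaler0.
  exists (fun i => x i 0); split.
    by have [i [j]] := matrix0Pn _ xn0; rewrite ord1; exists i.
  apply: etrans (pencil_self S x); rewrite mulmx_suml.
  by apply: eq_bigr => i _; rewrite scalemxAl.
apply: (rank_of_kernel_line xn0); first exact: pencil_self.
exact: pencil_kernel.
Qed.
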